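(* For every acyclic weighted digraph $D$ in which every arc has weight at least $1$, $\mathrm{mac}(D)\ge\frac{w(D)}{4}+\frac{w(D)^{0.6}}{24}$.
   Context: A weighted digraph $D=(V,A,w)$ is a digraph without loops or parallel arcs (opposite arcs allowed) with weights $w:A\to\mathbb{R}_{\ge0}$; $w(D)$ is the total arc weight. For a partition $(X,Y)$ of $V$, $w(X,Y)$ is the total weight of arcs from $X$ to $Y$, and $\mathrm{mac}(D)=\max_{(X,Y)}w(X,Y)$. Acyclic means containing no directed cycle. *)

From mathcomp Require Import all_boot all_order all_algebra.
From mathcomp Require Import all_classical all_reals all_analysis.
Set Implicit Arguments. Unset Strict Implicit. Unset Printing Implicit Defensive.
Import Order.TTheory GRing.Theory Num.Theory.
Local Open Scope ring_scope.

(* A weighted digraph on the finite vertex type T: an arc relation [a]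
   (irreflexive: no loops; being a relation, there are no parallel arcs,
   while opposite arcs are allowed) and a weight function [w] on ordered pairs,
   only meaningful on arcs. *)
Definition loopless (T : finType) (a : rel T) : Prop := forall x, ~~ a x x.

Definition nonneg_weights (R : realType) (T : finType) (a : rel T)
  (w : T -> T -> R) : Prop := forall x y, a x y -> 0 <= w x y.

Definition total_weight (R : realType) (T : finType) (a : rel T)
  (w : T -> T -> R) : R :=
  \sum_(x : T) \sum_(y : T | a x y) w x y.

Definition cut_weight (R : realType) (T : finType) (a : rel T)
  (w : T -> T -> R) (X : {set T}) : R :=
  \sum_(x in X) \sum_(y in ~: X | a x y) w x y.

Definition mac (R : realType) (T : finType) (a : rel T) (w : T -> T -> R) : R :=
  \big[Num.max/0]_(X : {set T}) cut_weight a w X.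

Definition acyclic (T : finType) (a : rel T) : Prop :=
  forall (x : T) (p : seq T), p != [::] -> path a x p -> last x p != x.

From mathcomp Require Import all_boot all_order all_algebra.
From mathcomp Require Import all_classical all_reals all_analysis.
From mathcomp Require Import ring lra zify.
Import Order.TTheory GRing.Theory Num.Theory.
Local Open Scope ring_scope.
Set Implicit Arguments. Unset Strict Implicit.

(* Let N be a maximum-weight matching, M = w(N) and C the set of matched
   vertices, a vertex cover with |C| <= 2M.  Three kinds of cuts bound mac(D):
   - a fair coin for every arc of N (its ends on opposite sides) and for every
     other vertex gives mac >= w(D)/4 + M/4;
   - C being a cover, the cuts (C, V \ C) and (V \ C, C) give
     2 mac >= w(D) - w(D[C]);
   - number C along a topological order.  The arcs of D[C] joining positions at
     distance l form two matchings, so the total distance over D[C] is at least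
     w(D[C])^2 / (4M); hence one of the |C| level cuts of the numbering has
     weight Phi >= w(D[C])^2 / (8 M^2).  Biasing independent coins by
     Phi / (2 w(D)) towards the lower side of this downward-closed cut gives
     mac >= w(D)/4 + Phi^2 / (4 w(D)).
   If w(D[C]) <= 5 w(D)/12 the second bound suffices, if M >= w(D)^(3/5)/6 the
   first, and otherwise the third. *)

Lemma sum_ffun_bool_prod (R : comNzRingType) (I : finType) (G : I -> bool -> R) :
  \sum_(f : {ffun I -> bool}) \prod_i G i (f i) = \prod_i (G i true + G i false).
Proof. by rewrite -bigA_distr_bigA; apply: eq_bigr => i _; rewrite big_bool. Qed.

Lemma product_coin_pair (R : comNzRingType) (I : finType) (F : I -> bool -> R)
  (F1 : forall i, F i true + F i false = 1) (i j : I) (bi bj : bool) :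
  \sum_(f : {ffun I -> bool}) (\prod_k F k (f k)) * ((f i == bi) && (f j == bj))%:R
  = if i == j then (bi == bj)%:R * F i bi else F i bi * F j bj.
Proof.
pose sel k (l : I) b (c : bool) : R := if l == k then (c == b)%:R else 1.
have selE k b f : \prod_l sel k l b (f l) = (f k == b)%:R.
  by rewrite -big_mkcond /= big_pred1_eq.
transitivity (\sum_(f : {ffun I -> bool})
                \prod_l (F l (f l) * sel i l bi (f l) * sel j l bj (f l))).
  apply: eq_bigr => f _; rewrite !big_split /= !selE.
  by case: (f i == bi); case: (f j == bj); rewrite /= ?mulr1 ?mulr0.
rewrite (sum_ffun_bool_prod (fun l b => F l b * sel i l bi b * sel j l bj b)).
have other l : l != i -> l != j ->
    F l true * sel i l bi true * sel j l bj true
    + F l false * sel i l bi false * sel j l bj false = 1.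
  by move=> /negbTE li /negbTE lj; rewrite /sel li lj !mulr1.
have [eij|nij] := eqVneq i j.
  subst j; rewrite (bigD1 i) //= big1 => [|l li]; last exact: other.
  rewrite /sel eqxx mulr1; clear other.
  by case: bi; case: bj; rewrite /= ?mulr1 ?mulr0 ?mul1r ?mul0r ?addr0 ?add0r.
rewrite (bigD1 i) //= (bigD1 j) 1?eq_sym //= big1 => [|l /andP[li lj]]; last first.
  exact: other.
rewrite /sel !eqxx [j == i]eq_sym (negbTE nij) !mulr1; clear other.
by case: bi; case: bj; rewrite /= ?mulr1 ?mulr0 ?mul1r ?mul0r ?addr0 ?add0r.
Qed.

Section ArcSums.
Variables (R : realType) (T : finType) (a : rel T) (w : T -> T -> R).

Definition arc_sum (g : T -> T -> R) : R :=
  \sum_x \sum_(y | a x y) w x y * g x y.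

Lemma eq_arc_sum (g1 g2 : T -> T -> R) :
  (forall x y, a x y -> g1 x y = g2 x y) -> arc_sum g1 = arc_sum g2.
Proof. by move=> e; apply: eq_bigr => x _; apply: eq_bigr => y axy; rewrite e. Qed.

Lemma arc_sumD (g1 g2 : T -> T -> R) :
  arc_sum (fun x y => g1 x y + g2 x y) = arc_sum g1 + arc_sum g2.
Proof.
rewrite /arc_sum -big_split; apply: eq_bigr => x _.
by rewrite -big_split; apply: eq_bigr => y _; rewrite mulrDr.
Qed.

Lemma arc_sumZ (c : R) (g : T -> T -> R) :
  arc_sum (fun x y => c * g x y) = c * arc_sum g.
Proof.
rewrite /arc_sum mulr_sumr; apply: eq_bigr => x _.
by rewrite mulr_sumr; apply: eq_bigr => y _; rewrite mulrCA.
Qed.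

Lemma arc_sumB (g1 g2 : T -> T -> R) :
  arc_sum (fun x y => g1 x y - g2 x y) = arc_sum g1 - arc_sum g2.
Proof.
rewrite /arc_sum -sumrB; apply: eq_bigr => x _.
by rewrite -sumrB; apply: eq_bigr => y _; rewrite mulrBr.
Qed.

Lemma arc_sum_nat (k : nat) (g : nat -> T -> T -> R) :
  \sum_(0 <= t < k) arc_sum (g t) = arc_sum (fun x y => \sum_(0 <= t < k) g t x y).
Proof.
rewrite /arc_sum exchange_big /=; apply: eq_bigr => x _.
by rewrite exchange_big /=; apply: eq_bigr => y _; rewrite mulr_sumr.
Qed.

Lemma arc_sum_eq0 (g : T -> T -> R) :
  (forall x y, a x y -> g x y = 0) -> arc_sum g = 0.
Proof. by move=> g0; apply: big1 => x _; apply: big1 => y axy; rewrite g0 // mulr0. Qed.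

Lemma total_weightE : total_weight a w = arc_sum (fun _ _ => 1).
Proof. by apply: eq_bigr => x _; apply: eq_bigr => y _; rewrite mulr1. Qed.

Lemma arc_sum_const (c : R) : arc_sum (fun _ _ => c) = c * total_weight a w.
Proof. by rewrite total_weightE -arc_sumZ; apply: eq_arc_sum => x y _; rewrite mulr1. Qed.

Lemma cut_weightE (X : {set T}) :
  cut_weight a w X = arc_sum (fun x y => ((x \in X) && (y \notin X))%:R).
Proof.
rewrite /cut_weight big_mkcond; apply: eq_bigr => x _.
case: (boolP (x \in X)) => xX /=; last by rewrite big1 // => y _; rewrite mulr0.
rewrite big_mkcond [RHS]big_mkcond; apply: eq_bigr => y _.
by rewrite !inE; case: (y \in X); case: (a x y); rewrite /= ?mulr1 ?mulr0.
Qed.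

Lemma cut_weight_le_mac (X : {set T}) : cut_weight a w X <= mac a w.
Proof. by rewrite /mac (bigD1 X) //= le_max lexx. Qed.

Hypothesis w_ge0 : nonneg_weights a w.

Lemma ler_arc_sum (g1 g2 : T -> T -> R) :
  (forall x y, a x y -> g1 x y <= g2 x y) -> arc_sum g1 <= arc_sum g2.
Proof.
move=> le12; apply: ler_sum => x _; apply: ler_sum => y axy.
by apply: ler_wpM2l; [exact: w_ge0 | exact: le12].
Qed.

Lemma arc_sum_ge0 (g : T -> T -> R) :
  (forall x y, a x y -> 0 <= g x y) -> 0 <= arc_sum g.
Proof. by move=> g0; rewrite -(arc_sum_eq0 (g := fun _ _ => 0)) //; exact: ler_arc_sum. Qed.

Lemma cut_weight_ge0 (X : {set T}) : 0 <= cut_weight a w X.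
Proof. by rewrite cut_weightE; apply: arc_sum_ge0 => x y _; exact: ler0n. Qed.

Lemma cut_weight_le_total (X : {set T}) : cut_weight a w X <= total_weight a w.
Proof.
by rewrite cut_weightE total_weightE; apply: ler_arc_sum => x y _; case: (_ && _).
Qed.

End ArcSums.

Section RandomCuts.
Variables (R : realType) (T : finType) (a : rel T) (w : T -> T -> R).
Hypothesis w_ge0 : nonneg_weights a w.

(* The vertices are grouped into blocks [r v]; each block tosses an independent
   coin, with [F i b] the probability that coin [i] shows [b], and [v] is put in
   [X] iff its coin shows [s v].  The left-hand side is the expected weight of
   the cut [(X, V \ X)], so some cut is at least as heavy. *)
Lemma expected_cut_le_mac (I : finType) (F : I -> bool -> R)
  (F_ge0 : forall i b, 0 <= F i b) (F1 : forall i, F i true + F i false = 1)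
  (r : T -> I) (s : T -> bool) :
  arc_sum a w (fun x y => if r x == r y then (s x == ~~ s y)%:R * F (r x) (s x)
                          else F (r x) (s x) * F (r y) (~~ s y))
  <= mac a w.
Proof.
pose prob (f : {ffun I -> bool}) := \prod_i F i (f i).
pose X (f : {ffun I -> bool}) := [set v | f (r v) == s v].
have prob_sum1 : \sum_f prob f = 1.
  by rewrite sum_ffun_bool_prod big1 // => i _; rewrite F1.
apply: (@le_trans _ _ (\sum_f prob f * cut_weight a w (X f))).
  rewrite le_eqVlt; apply/orP; left; apply/eqP; symmetry.
  under eq_bigr => f _ do rewrite cut_weightE mulr_sumr.
  rewrite exchange_big /=; apply: eq_bigr => x _.
  under eq_bigr => f _ do rewrite mulr_sumr.
  rewrite exchange_big /=; apply: eq_bigr => y _.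
  rewrite -(product_coin_pair F1) mulr_sumr; apply: eq_bigr => f _.
  rewrite /X !inE mulrCA; congr (_ * (_ * _%:R)).
  by case: (f (r y)); case: (s y).
apply: (@le_trans _ _ (\sum_f prob f * mac a w)).
  apply: ler_sum => f _; apply: ler_wpM2l; last exact: cut_weight_le_mac.
  by apply: prodr_ge0 => i _.
by rewrite -mulr_suml prob_sum1 mul1r.
Qed.

Hypothesis a_loopless : loopless a.

Lemma arc_neq x y : a x y -> x != y.
Proof. by move=> axy; apply/eqP => exy; move: (a_loopless y); rewrite -{1}exy axy. Qed.

Lemma mac_ge_downset (P : {set T}) (P_down : forall x y, a x y -> y \in P -> x \in P)
  (d : R) : 0 <= d -> d <= 2^-1 ->
  total_weight a w / 4%:R + d * cut_weight a w P - d ^+ 2 * total_weight a w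
  <= mac a w.
Proof.
move=> d_ge0 d_le.
pose p v : R := if v \in P then 2^-1 + d else 2^-1 - d.
pose F v (b : bool) := if b then p v else 1 - p v.
have F_ge0 v b : 0 <= F v b by rewrite /F /p; case: b; case: ifP => _; lra.
have F1 v : F v true + F v false = 1 by rewrite /F addrC subrK.
apply: (le_trans _ (expected_cut_le_mac F_ge0 F1 id (fun=> true))).
have -> : total_weight a w / 4%:R + d * cut_weight a w P - d ^+ 2 * total_weight a w
  = arc_sum a w (fun x y => (4%:R^-1 - d ^+ 2) + d * ((x \in P) && (y \notin P))%:R).
  by rewrite arc_sumD arc_sumZ arc_sum_const cut_weightE; ring.
apply: (ler_arc_sum w_ge0) => x y axy; rewrite (negbTE (arc_neq axy)) /F /p /=.
case: (boolP (y \in P)) => yP; first by rewrite (P_down x y axy yP) /=; lra.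
by case: (x \in P); rewrite /= ?mulr1 ?mulr0; nra.
Qed.

Lemma mac_ge_downset_cut (P : {set T})
  (P_down : forall x y, a x y -> y \in P -> x \in P) :
  0 < total_weight a w ->
  total_weight a w / 4%:R + cut_weight a w P ^+ 2 / (4%:R * total_weight a w)
  <= mac a w.
Proof.
set W := total_weight a w; set c := cut_weight a w P => W_gt0.
have c_ge0 : 0 <= c by exact: cut_weight_ge0.
have c_le : c <= W by exact: cut_weight_le_total.
have := @mac_ge_downset P P_down (c / (2%:R * W)).
rewrite divr_ge0 ?ler_pdivrMr //=; try lra.
have -> : W / 4%:R + c / (2%:R * W) * c - (c / (2%:R * W)) ^+ 2 * W
          = W / 4%:R + c ^+ 2 / (4%:R * W) by field; lra.
by apply; lra.
Qed.

End RandomCuts.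

Section Matchings.
Variables (R : realType) (T : finType) (a : rel T) (w : T -> T -> R).

Definition matching (S : {set T * T}) : bool :=
  [forall e in S, a e.1 e.2] &&
  [forall e in S, forall e' in S, (e != e') ==>
     [&& e.1 != e'.1, e.1 != e'.2, e.2 != e'.1 & e.2 != e'.2]].

Definition matching_weight (S : {set T * T}) : R := \sum_(e in S) w e.1 e.2.

Definition matched (S : {set T * T}) : {set T} :=
  [set v | [exists e in S, (e.1 == v) || (e.2 == v)]].

Lemma matchingP (S : {set T * T}) :
  matching S ->
  (forall e, e \in S -> a e.1 e.2) /\
  (forall e e', e \in S -> e' \in S -> e != e' ->
     [&& e.1 != e'.1, e.1 != e'.2, e.2 != e'.1 & e.2 != e'.2]).
Proof.
case/andP => /forallP arcs /forallP disj; split=> [e eS | e e' eS e'S ne].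
  by move: (arcs e); rewrite eS.
by move: (disj e); rewrite eS => /forallP /(_ e'); rewrite e'S ne.
Qed.

Lemma matched_fst (S : {set T * T}) e : e \in S -> e.1 \in matched S.
Proof. by move=> eS; rewrite inE; apply/existsP; exists e; rewrite eS eqxx. Qed.

Lemma matched_snd (S : {set T * T}) e : e \in S -> e.2 \in matched S.
Proof. by move=> eS; rewrite inE; apply/existsP; exists e; rewrite eS eqxx orbT. Qed.

Lemma card_matched (S : {set T * T}) : (#|matched S| <= 2 * #|S|)%N.
Proof.
have sub : matched S \subset [set e.1 | e in S] :|: [set e.2 | e in S].
  apply/fintype.subsetP => v; rewrite inE => /existsP[e /andP[eS /orP[]/eqP <-]];
    by rewrite inE imset_f ?orbT.
apply: leq_trans (subset_leq_card sub) _.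
rewrite cardsU mul2n -addnn; apply: leq_trans (leq_subr _ _) _.
by apply: leq_add; apply: leq_imset_card.
Qed.

Lemma arc_sum_mem (S : {set T * T}) :
  (forall e, e \in S -> a e.1 e.2) ->
  arc_sum a w (fun x y => ((x, y) \in S)%:R) = matching_weight S.
Proof.
move=> S_arcs; rewrite /matching_weight /arc_sum.
under eq_bigr => x _ do rewrite big_mkcond /=.
rewrite pair_big /= [RHS]big_mkcond /=; apply: eq_bigr => [[x y]] _ /=.
case: (boolP ((x, y) \in S)) => [/S_arcs -> | _]; first by rewrite mulr1.
by case: (a x y); rewrite ?mulr0.
Qed.

Lemma exists_max_matching : exists2 N, matching N &
  forall S, matching S -> matching_weight S <= matching_weight N.
Proof.
case: (@arg_maxP _ _ _ finset.set0 matching matching_weight) => [|N N_match N_max].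
  by apply/andP; split; apply/forallP => e; rewrite inE.
by exists N.
Qed.

Lemma card_matched_le_weight (S : {set T * T}) :
  (forall x y, a x y -> 1 <= w x y) -> matching S ->
  #|matched S|%:R <= 2%:R * matching_weight S.
Proof.
move=> w_ge1 S_match; have [S_arcs _] := matchingP S_match.
have card_le : (#|S|)%:R <= matching_weight S.
  by rewrite -sum1_card natr_sum; apply: ler_sum => e /S_arcs /w_ge1.
apply: le_trans (ler_wpM2l _ card_le) => //.
by rewrite -natrM ler_nat card_matched.
Qed.

Lemma maximal_matching_cover (N : {set T * T}) :
  (forall x y, a x y -> 0 < w x y) -> matching N ->
  (forall S, matching S -> matching_weight S <= matching_weight N) ->
  forall x y, a x y -> (x \in matched N) || (y \in matched N).
Proof.
move=> w_gt0 N_match N_max x y axy; apply/negPn/negP; rewrite negb_or.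
case/andP=> xN yN; have [N_arcs N_disj] := matchingP N_match.
have xyN : (x, y) \notin N by apply: contra xN => /matched_fst.
have disjoint_xy e : e \in N -> [&& x != e.1, x != e.2, y != e.1 & y != e.2].
  move=> eN; apply/and4P; split;
    [apply: contraNneq xN|apply: contraNneq xN|apply: contraNneq yN|apply: contraNneq yN]
    => ->; by [apply: matched_fst | apply: matched_snd].
have Nxy_match : matching ((x, y) |: N).
  apply/andP; split; apply/forallP => e; apply/implyP; rewrite !inE.
    by case/orP => [/eqP -> // | /N_arcs].
  move=> eN; apply/forallP => e'; apply/implyP; rewrite !inE => e'N; apply/implyP.
  case/orP: eN => [/eqP -> | eN]; case/orP: e'N => [/eqP -> | e'N].
  - by rewrite eqxx.
  - by move=> _; exact: disjoint_xy.
  - by move=> _; case/and4P: (disjoint_xy e eN) => *; rewrite /= ![_ == x]eq_sym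
      ![_ == y]eq_sym; apply/and4P.
  - exact: N_disj.
have := N_max _ Nxy_match; rewrite /matching_weight big_setU1 //=.
by have := w_gt0 _ _ axy; lra.
Qed.

End Matchings.

Section CutBounds.
Variables (R : realType) (T : finType) (a : rel T) (w : T -> T -> R).
Hypotheses (w_ge0 : nonneg_weights a w) (a_loopless : loopless a) (a_acyclic : acyclic a).

Lemma acyclic_asym x y : a x y -> a y x -> False.
Proof.
by move=> axy ayx; have := @a_acyclic x [:: y; x] isT; rewrite /= axy ayx eqxx => /(_ isT).
Qed.

(* Each arc (u, v) of the matching gets its own fair coin deciding the side of
   [u], with [v] sent to the other side; all other vertices flip their own coin. *)
Lemma mac_ge_matching (N : {set T * T}) : matching a N ->
  total_weight a w / 4%:R + matching_weight w N / 4%:R <= mac a w.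
Proof.
move=> N_match; have [N_arcs N_disj] := matchingP N_match.
pose F (v : T) (b : bool) : R := 2^-1.
have F_ge0 v b : 0 <= F v b by rewrite /F; lra.
have F1 v : F v true + F v false = 1 by rewrite /F; lra.
pose r v := if [pick u | (u, v) \in N] is Some u then u else v.
pose s v := if [pick u | (u, v) \in N] is Some _ then false else true.
have head x y : (x, y) \in N -> r y = x /\ s y = false.
  move=> xyN; rewrite /r /s; case: pickP => [u uyN|/(_ x)]; last by rewrite xyN.
  split=> //; apply/eqP; apply: contraT => nux.
  have := N_disj _ _ uyN xyN; rewrite xpair_eqE negb_and nux /= eqxx.
  by move=> /(_ isT); rewrite !andbF.
have tail x y : (x, y) \in N -> r x = x /\ s x = true.
  move=> xyN; rewrite /r /s; case: pickP => [u uxN|//].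
  have ne : (u, x) != (x, y).
    by rewrite xpair_eqE negb_and eq_sym (arc_neq a_loopless (N_arcs _ xyN)) orbT.
  by have := N_disj _ _ uxN xyN ne; rewrite /= eqxx !andbF.
apply: (le_trans _ (expected_cut_le_mac a w F_ge0 F1 r s)).
have -> : total_weight a w / 4%:R + matching_weight w N / 4%:R
  = arc_sum a w (fun x y => 4%:R^-1 + 4%:R^-1 * ((x, y) \in N)%:R).
  by rewrite arc_sumD arc_sumZ arc_sum_const (arc_sum_mem w N_arcs); ring.
apply: (ler_arc_sum w_ge0) => x y axy; rewrite /F.
case: (boolP ((x, y) \in N)) => xyN.
  have [-> ->] := head _ _ xyN; have [-> ->] := tail _ _ xyN.
  by rewrite eqxx /=; lra.
suff -> : (r x == r y) = false by rewrite mulr0 addr0; lra.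
have nxy := arc_neq a_loopless axy.
apply/negbTE; rewrite /r; case: pickP => [u uxN|_]; case: pickP => [u' u'yN|yN].
- apply: contra_neq nxy => euu; move: u'yN; rewrite -euu => uyN.
  have [[]//|ne] := eqVneq (u, x) (u, y).
  by have := N_disj _ _ uxN uyN ne; rewrite /= eqxx.
- by apply/eqP => euy; move: uxN; rewrite euy => /N_arcs /(acyclic_asym axy).
- by apply/eqP => exu; move: u'yN; rewrite -exu (negbTE xyN).
- exact: nxy.
Qed.

Lemma mac_ge_vertex_cover (C : {set T}) :
  (forall x y, a x y -> (x \in C) || (y \in C)) ->
  total_weight a w - arc_sum a w (fun x y => ((x \in C) && (y \in C))%:R)
  <= 2%:R * mac a w.
Proof.
move=> C_cover; have := cut_weight_le_mac a w C; have := cut_weight_le_mac a w (~: C).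
suff -> : total_weight a w - arc_sum a w (fun x y => ((x \in C) && (y \in C))%:R)
          = cut_weight a w C + cut_weight a w (~: C) by lra.
rewrite total_weightE !cut_weightE -arc_sumB -arc_sumD.
apply: eq_arc_sum => x y axy; move: (C_cover x y axy); rewrite !inE.
by case: (x \in C); case: (y \in C); rewrite /= ?subr0 ?subrr ?addr0 ?add0r.
Qed.

End CutBounds.

Section RankIn.
Variables (T : finType) (f : T -> nat) (C : {set T}).

Definition rank_in (x : T) : nat := #|[set c in C | (f c < f x)%N]|.

Lemma rank_in_le x y : (f x <= f y)%N -> (rank_in x <= rank_in y)%N.
Proof.
move=> le_xy; apply: subset_leq_card; apply/fintype.subsetP => z; rewrite !inE.
by case/andP => -> /leq_trans ->.
Qed.

Lemma rank_in_lt x y : (f x < f y)%N -> x \in C -> (rank_in x < rank_in y)%N.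
Proof.
move=> lt_xy xC; apply: proper_card; apply/properP; split.
  apply/fintype.subsetP => z; rewrite !inE.
  by case/andP => -> /ltn_trans ->.
by exists x; rewrite !inE ?xC ?lt_xy // ltnn.
Qed.

Lemma rank_in_inj : injective f -> {in C &, injective rank_in}.
Proof.
move=> f_inj x y xC yC e; case: (ltngtP (f x) (f y)) => [lt|lt|/f_inj //].
- by have := rank_in_lt lt xC; rewrite e ltnn.
- by have := rank_in_lt lt yC; rewrite e ltnn.
Qed.

Lemma rank_in_lt_card x : x \in C -> (rank_in x < #|C|)%N.
Proof.
move=> xC; apply: proper_card; apply/properP; split.
  by apply/fintype.subsetP => z; rewrite !inE; case/andP.
by exists x; rewrite // !inE ltnn andbF.
Qed.

End RankIn.

Section TopologicalRank.
Variables (T : finType) (a : rel T).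

Definition height (x : T) : nat := #|[set y | (y != x) && connect a y x]|.

Definition topo_rank (x : T) : nat := (height x * #|T| + enum_rank x)%N.

Lemma topo_rank_inj : injective topo_rank.
Proof.
move=> x y; rewrite /topo_rank => exy.
have T_gt0 : (0 < #|T|)%N by apply: leq_ltn_trans (ltn_ord (enum_rank x)).
have hxy : height x = height y.
  move/(congr1 (divn^~ #|T|)): exy.
  by rewrite !divnMDl // !divn_small ?ltn_ord // !addn0.
move: exy; rewrite hxy => /addnI eq_rank.
by apply: enum_rank_inj; apply: val_inj.
Qed.

Hypotheses (a_loopless : loopless a) (a_acyclic : acyclic a).

Lemma height_lt x y : a x y -> (height x < height y)%N.
Proof.
move=> axy; apply: proper_card; apply/properP; split.
  apply/fintype.subsetP => z; rewrite !inE => /andP[_ zx].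
  rewrite (connect_trans zx (connect1 axy)) andbT.
  apply: contraTneq zx => -> {z}; apply/negP => /connectP[p yp xp].
  by have := @a_acyclic x (y :: p) isT; rewrite /= axy yp -xp eqxx => /(_ isT).
by exists x; rewrite !inE ?eqxx // (arc_neq a_loopless axy) connect1.
Qed.

Lemma topo_rank_lt x y : a x y -> (topo_rank x < topo_rank y)%N.
Proof.
move=> /height_lt lt_xy; rewrite /topo_rank.
apply: (@leq_trans ((height x).+1 * #|T|)).
  by rewrite mulSn addnC ltn_add2r ltn_ord.
by apply: leq_trans (leq_addr _ _); rewrite leq_mul2r lt_xy orbT.
Qed.

Lemma acyclic_numbering (C : {set T}) : exists n : T -> nat,
  [/\ forall x y, a x y -> (n x <= n y)%N,
      forall x y, a x y -> x \in C -> (n x < n y)%N,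
      {in C &, injective n} & {in C, forall x, (n x < #|C|)%N}].
Proof.
exists (rank_in topo_rank C); split.
- by move=> x y /topo_rank_lt /ltnW; exact: rank_in_le.
- by move=> x y /topo_rank_lt; exact: rank_in_lt.
- exact/rank_in_inj/topo_rank_inj.
- exact: rank_in_lt_card.
Qed.

End TopologicalRank.

Lemma sum_nat_lt_indicator (R : nzRingType) (n k : nat) :
  \sum_(0 <= t < k) (t < n)%N%:R = (minn n k)%:R :> R.
Proof.
elim: k => [|k IHk]; first by rewrite big_geq // minn0.
by rewrite big_nat_recr //= IHk -natrD; congr (_%:R); case: (ltnP k n) => /=; lia.
Qed.

Lemma odd_divnDr (q l : nat) : (0 < l)%N -> odd ((q + l) %/ l) = ~~ odd (q %/ l).
Proof. by move=> l_gt0; rewrite divnDr ?dvdnn // divnn l_gt0 addn1 oddS. Qed.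

Lemma exists_ge_mean (R : realFieldType) (k : nat) (f : nat -> R) (L : R) :
  (0 < k)%N -> L <= \sum_(0 <= t < k) f t -> exists2 t, (t < k)%N & L <= k%:R * f t.
Proof.
move=> k_gt0 L_le.
have [/existsP[t le_t]|] := boolP [exists t : 'I_k, L <= k%:R * f t].
  by exists t.
rewrite negb_exists => /forallP small.
have : \sum_(0 <= t < k) k%:R * f t < \sum_(0 <= t < k) L.
  apply: ltr_sum_nat => // t /andP[_ lt_tk].
  by rewrite ltNge; exact: (small (Ordinal lt_tk)).
rewrite -mulr_sumr sumr_const_nat subn0 -mulr_natl.
have : 0 < k%:R :> R by rewrite ltr0n.
nra.
Qed.

Lemma sum_nat_affine (R : numFieldType) (c d : R) (J : nat) :
  \sum_(0 <= j < J) (c - d * j%:R) = J%:R * c - d * J%:R * (J%:R - 1) / 2%:R.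
Proof.
elim: J => [|J IHJ]; first by rewrite big_geq //; field.
by rewrite big_nat_recr //= IHJ -natr1; field.
Qed.

(* Take [J] the integer part of [c / (2 M)] plus one, so that [0 < J - c / (2 M) <= 1]. *)
Lemma exists_nat_quadratic_ge (R : archiFieldType) (c M : R) : 0 <= c -> 0 < M ->
  exists J : nat, c ^+ 2 / (4%:R * M) <= J%:R * c - M * J%:R * (J%:R - 1).
Proof.
move=> c_ge0 M_gt0; pose x := c / (2%:R * M).
have x_ge0 : 0 <= x by rewrite divr_ge0 // mulr_ge0 // ltW.
have /andP[trunc_le lt_trunc] := truncn_itv x_ge0.
exists (Num.trunc x).+1; rewrite -[(Num.trunc x).+1%:R]natr1.
have -> : c = 2%:R * M * x by rewrite /x mulrC divfK // mulf_neq0 // gt_eqF.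
have -> : (2%:R * M * x) ^+ 2 / (4%:R * M) = M * x ^+ 2 by field; rewrite gt_eqF.
set J := (Num.trunc x)%:R in trunc_le lt_trunc *.
have : x ^+ 2 <= (J + 1) * (2%:R * x - (J + 1) + 1) by rewrite expr2; nra.
nra.
Qed.

Section Gaps.
Variables (R : realType) (T : finType) (a : rel T) (w : T -> T -> R).
Variables (C : {set T}) (n : T -> nat) (M : R).
Hypotheses (w_ge0 : nonneg_weights a w)
  (n_lt : forall x y, a x y -> x \in C -> (n x < n y)%N)
  (n_inj : {in C &, injective n})
  (M_max : forall S, matching a S -> matching_weight w S <= M).

Definition inner (x y : T) : bool := (x \in C) && (y \in C).

Definition gap (x y : T) : nat := (n y - n x)%N.

(* Arcs of gap [l] starting in positions [q] with [q %/ l] of a fixed parity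
   are pairwise disjoint. *)
Lemma arc_sum_gap_eq_le (l : nat) : (0 < l)%N ->
  arc_sum a w (fun x y => (inner x y && (gap x y == l))%:R) <= 2%:R * M.
Proof.
move=> l_gt0.
pose S b := [set e : T * T | [&& a e.1 e.2, inner e.1 e.2, gap e.1 e.2 == l
                                & odd (n e.1 %/ l) == b]].
have S_arcs b e : e \in S b -> a e.1 e.2 by rewrite inE => /andP[].
have S_mem b x y : (x, y) \in S b ->
    [/\ x \in C, y \in C, n y = (n x + l)%N & odd (n x %/ l) = b].
  rewrite inE /= => /and4P[axy /andP[xC yC] /eqP gap_l /eqP par].
  by split=> //; have := n_lt axy xC; rewrite /gap in gap_l; lia.
have S_match b : matching a (S b).
  apply/andP; split.
    by apply/forallP => e; apply/implyP; exact: S_arcs.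
  apply/forallP => -[x y]; apply/implyP => xyS.
  apply/forallP => -[x' y']; apply/implyP => xyS'; apply/implyP => ne.
  have [xC yC ny px] := S_mem _ _ _ xyS; have [xC' yC' ny' px'] := S_mem _ _ _ xyS'.
  apply/and4P; split; apply: contra_neq ne => /= e.
  - have ny_eq : n y = n y' by rewrite ny ny' e.
    by rewrite e (n_inj yC yC' ny_eq).
  - by move: px; rewrite e ny' odd_divnDr // px'; case: (b).
  - by move: px'; rewrite -e ny odd_divnDr // px; case: (b).
  - have nx : n x = n x' by move: ny ny'; rewrite e; lia.
    by rewrite (n_inj xC xC' nx) e.
have -> : arc_sum a w (fun x y => (inner x y && (gap x y == l))%:R)
          = matching_weight w (S true) + matching_weight w (S false).
  rewrite -(arc_sum_mem w (S_arcs true)) -(arc_sum_mem w (S_arcs false)) -arc_sumD.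
  apply: eq_arc_sum => x y axy; rewrite !inE /= axy.
  by case: (inner x y); case: (gap x y == l); case: (odd _); rewrite /= ?addr0 ?add0r.
by have := M_max (S_match true); have := M_max (S_match false); lra.
Qed.

Definition inner_weight : R := arc_sum a w (fun x y => (inner x y)%:R).

Definition gap_sum : R := arc_sum a w (fun x y => (inner x y)%:R * (gap x y)%:R).

Lemma arc_sum_gap_le (j : nat) :
  arc_sum a w (fun x y => (inner x y)%:R * (gap x y <= j)%N%:R) <= 2%:R * M * j%:R.
Proof.
elim: j => [|j IHj].
  rewrite mulr0 arc_sum_eq0 // => x y axy; case: (boolP (inner x y)) => [/andP[xC _]|_].
    by rewrite /gap leqn0 subn_eq0 leqNgt (n_lt axy xC) mulr0.
  by rewrite mul0r.
rewrite (@eq_arc_sum _ _ a w _ (fun x y => (inner x y)%:R * (gap x y <= j)%N%:R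
                                     + (inner x y && (gap x y == j.+1))%:R)).
  rewrite arc_sumD; have := arc_sum_gap_eq_le (ltn0Sn j); rewrite -natr1; lra.
move=> x y _; case: (inner x y); rewrite /= ?mul0r ?mul1r ?addr0 //.
by rewrite leq_eqVlt ltnS; case: eqP => [->|_]; rewrite /= ?ltnn ?add0r ?addr0.
Qed.

Lemma gap_sum_ge (J : nat) :
  J%:R * inner_weight - M * J%:R * (J%:R - 1) <= gap_sum.
Proof.
have gap_gt j : arc_sum a w (fun x y => (inner x y)%:R * (j < gap x y)%N%:R)
    = inner_weight - arc_sum a w (fun x y => (inner x y)%:R * (gap x y <= j)%N%:R).
  rewrite -arc_sumB; apply: eq_arc_sum => x y _; rewrite ltnNge.
  by case: (gap x y <= j)%N; rewrite /= ?mulr1 ?mulr0 ?subr0 ?subrr.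
apply: (@le_trans _ _ (\sum_(0 <= j < J) (inner_weight - 2%:R * M * j%:R))).
  by rewrite sum_nat_affine; lra.
apply: (@le_trans _ _ (\sum_(0 <= j < J)
    arc_sum a w (fun x y => (inner x y)%:R * (j < gap x y)%N%:R))).
  by apply: ler_sum => j _; rewrite gap_gt lerD2l lerN2 arc_sum_gap_le.
rewrite arc_sum_nat; apply: (ler_arc_sum w_ge0) => x y _.
rewrite -mulr_sumr sum_nat_lt_indicator; apply: ler_wpM2l; first exact: ler0n.
by rewrite ler_nat geq_minl.
Qed.

Hypothesis n_ltC : {in C, forall x, (n x < #|C|)%N}.

Definition level_set (t : nat) : {set T} := [set x | (n x <= t)%N].

Lemma gap_sum_le_level_cuts :
  gap_sum <= \sum_(0 <= t < #|C|) cut_weight a w (level_set t).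
Proof.
under eq_bigr => t _ do rewrite cut_weightE.
rewrite arc_sum_nat; apply: (ler_arc_sum w_ge0) => x y axy.
have [/andP[xC yC]|_] := boolP (inner x y); last first.
  by rewrite mul0r; apply: sumr_ge0 => t _; exact: ler0n.
have lt_xy := n_lt axy xC.
rewrite mul1r (eq_big_nat _ _ (F2 := fun t => (t < n y)%N%:R - (t < n x)%N%:R)).
  rewrite sumrB !sum_nat_lt_indicator (minn_idPl (ltnW (n_ltC yC))).
  by rewrite (minn_idPl (ltnW (n_ltC xC))) -natrB // ltnW.
move=> t _; rewrite !inE -ltnNge.
case: (ltnP t (n x)) => [lt_tx|le_xt]; first by rewrite (ltn_trans lt_tx lt_xy) subrr.
by case: (t < n y)%N; rewrite subr0.
Qed.

Hypotheses (n_le : forall x y, a x y -> (n x <= n y)%N) (card_C : #|C|%:R <= 2%:R * M).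

Lemma exists_heavy_downset : exists2 P : {set T},
  (forall x y, a x y -> y \in P -> x \in P) &
  inner_weight ^+ 2 <= 8%:R * M ^+ 2 * cut_weight a w P.
Proof.
have [C0|C_gt0] := posnP #|C|.
  exists finset.set0 => [x y _|]; first by rewrite inE.
  have -> : inner_weight = 0.
    by apply: arc_sum_eq0 => x y _; rewrite /inner (cards0_eq C0) inE.
  rewrite expr0n /=; apply: mulr_ge0; last exact: cut_weight_ge0.
  by apply: mulr_ge0; rewrite ?sqr_ge0.
have C_gt0' : 0 < #|C|%:R :> R by rewrite ltr0n.
have M_gt0 : 0 < M by move: (lt_le_trans C_gt0' card_C); rewrite pmulr_rgt0.
have iw_ge0 : 0 <= inner_weight by apply: arc_sum_ge0 => // x y _; exact: ler0n.
have [J quad] := exists_nat_quadratic_ge iw_ge0 M_gt0.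
have quad_le_gap_sum : inner_weight ^+ 2 / (4%:R * M) <= gap_sum.
  exact: le_trans quad (gap_sum_ge J).
have [t _ heavy] := exists_ge_mean C_gt0 (le_trans quad_le_gap_sum gap_sum_le_level_cuts).
exists (level_set t) => [x y axy|]; first by rewrite !inE; exact: leq_trans (n_le axy).
have : inner_weight ^+ 2 / (4%:R * M) <= 2%:R * M * cut_weight a w (level_set t).
  by apply: le_trans heavy _; apply: ler_wpM2r => //; exact: cut_weight_ge0.
rewrite ler_pdivrMr ?mulr_gt0 // => /le_trans; apply.
by rewrite le_eqVlt; apply/orP; left; apply/eqP; ring.
Qed.

End Gaps.

Lemma lower_bound_arith (R : realFieldType) (W y M WC Phi m : R) :
  1 <= W -> 0 <= y <= W -> y ^+ 5 = W ^+ 3 -> 0 <= M -> 0 <= Phi ->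
  W / 4%:R + M / 4%:R <= m ->
  W - WC <= 2%:R * m ->
  WC ^+ 2 <= 8%:R * M ^+ 2 * Phi ->
  W / 4%:R + Phi ^+ 2 / (4%:R * W) <= m ->
  W / 4%:R + y / 24%:R <= m.
Proof.
move=> W_ge1 /andP[y_ge0 y_le] y5 M_ge0 Phi_ge0 bound_match bound_cover WC_le bound_cut.
have [WC_small|WC_big] := lerP WC (5%:R / 12%:R * W); first lra.
have [|M_small] := lerP y (6%:R * M); first lra.
have y_gt0 : 0 < y by lra.
have Phi_y2 : 25%:R / 32%:R * W ^+ 2 < Phi * y ^+ 2.
  have : 25%:R / 144%:R * W ^+ 2 < WC ^+ 2 by rewrite !expr2; nra.
  have : 36%:R * M ^+ 2 <= y ^+ 2 by rewrite !expr2; nra.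
  move/(ler_wpM2r Phi_ge0); lra.
have Phi2_y4 : 625%:R / 1024%:R * W * y ^+ 5 < Phi ^+ 2 * y ^+ 4.
  have -> : 625%:R / 1024%:R * W * y ^+ 5 = (25%:R / 32%:R * W ^+ 2) ^+ 2.
    by rewrite -mulrA y5; field.
  have -> : Phi ^+ 2 * y ^+ 4 = (Phi * y ^+ 2) ^+ 2 by ring.
  have W2_ge0 : 0 <= 25%:R / 32%:R * W ^+ 2 by apply: mulr_ge0; [lra | exact: sqr_ge0].
  by rewrite [X in X < _]expr2 [X in _ < X]expr2; apply: ltr_pM.
have Phi2 : 625%:R / 1024%:R * W * y < Phi ^+ 2.
  move: Phi2_y4; rewrite (_ : _ * y ^+ 5 = 625%:R / 1024%:R * W * y * y ^+ 4); last by ring.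
  by rewrite ltr_pM2r // exprn_gt0.
have : y / 24%:R <= Phi ^+ 2 / (4%:R * W).
  by rewrite ler_pdivlMr ?mulr_gt0 //; [nra | lra].
lra.
Qed.

Lemma powR_three_fifths (R : realType) (W : R) : 1 <= W ->
  let y := powR W (3%:R / 5%:R) in 0 <= y <= W /\ y ^+ 5 = W ^+ 3.
Proof.
move=> W_ge1 y; split.
  by rewrite powR_ge0 /= ler1_powR //; lra.
rewrite /y -powR_mulrn ?powR_ge0 // -powRrM.
by rewrite (_ : 3%:R / 5%:R * 5%:R = 3%:R) ?powR_mulrn //; [lra | field].
Qed.

Lemma total_weight_eq0_or_ge1 (R : realType) (T : finType) (a : rel T) (w : T -> T -> R) :
  nonneg_weights a w -> (forall x y, a x y -> 1 <= w x y) ->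
  total_weight a w = 0 \/ 1 <= total_weight a w.
Proof.
move=> w_ge0 w_ge1.
have [/existsP[x /existsP[y axy]]|no_arc] := boolP [exists x, [exists y, a x y]].
  right; rewrite /total_weight (bigD1 x) //= (bigD1 y) //=.
  have := w_ge1 x y axy.
  have : 0 <= \sum_(z | a x z && (z != y)) w x z.
    by apply: sumr_ge0 => z /andP[axz _]; exact: w_ge0.
  have : 0 <= \sum_(v | v != x) \sum_(z | a v z) w v z.
    by apply: sumr_ge0 => v _; apply: sumr_ge0 => z /w_ge0.
  lra.
left; apply: big1 => x _; apply: big1 => y axy; move: no_arc.
by rewrite negb_exists => /forallP /(_ x); rewrite negb_exists => /forallP /(_ y); rewrite axy.
Qed.

Unset Implicit Arguments.

Theorem mainTheorem12 (R : realType) (T : finType) (a : rel T) (w : T -> T -> R) :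
  loopless a ->
  nonneg_weights a w ->
  acyclic a ->
  (forall x y, a x y -> 1 <= w x y) ->
  mac a w >= total_weight a w / 4%:R
             + powR (total_weight a w) (3%:R / 5%:R) / 24%:R.
Proof.
move=> a_loopless w_ge0 a_acyclic w_ge1.
have [W0|W_ge1] := total_weight_eq0_or_ge1 w_ge0 w_ge1.
  rewrite W0 powR0 ?mul0r ?addr0; last by apply/eqP; lra.
  exact: le_trans (cut_weight_ge0 w_ge0 finset.set0) (cut_weight_le_mac a w _).
have [y_bounds y5] := powR_three_fifths W_ge1.
have [N N_match N_max] := exists_max_matching a w.
have w_gt0 x y : a x y -> 0 < w x y by move=> /w_ge1; lra.
have C_cover := maximal_matching_cover w_gt0 N_match N_max.
have [n [n_le n_lt n_inj n_ltC]] := acyclic_numbering a_loopless a_acyclic (matched N).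
have card_C := card_matched_le_weight w_ge1 N_match.
have [P P_down heavy] := exists_heavy_downset w_ge0 n_lt n_inj N_max n_ltC n_le card_C.
have bound_match := mac_ge_matching w_ge0 a_loopless a_acyclic N_match.
have bound_cover := mac_ge_vertex_cover w C_cover.
have bound_cut : total_weight a w / 4%:R
    + cut_weight a w P ^+ 2 / (4%:R * total_weight a w) <= mac a w.
  by apply: mac_ge_downset_cut => //; lra.
have M_ge0 : 0 <= matching_weight w N.
  by apply: sumr_ge0 => e /(matchingP N_match).1 /w_gt0 /ltW.
exact: (lower_bound_arith W_ge1 y_bounds y5 M_ge0 (cut_weight_ge0 w_ge0 P)
          bound_match bound_cover heavy bound_cut).
Qed.
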